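(* Let $q,d,m\ge 1$ be integers and $\varepsilon\in[0,1)$. For $j=1,\ldots,m$ let $S_j=\{s_{j,1},s_{j,2},\ldots,s_{j,d}\}\subseteq\mathbb{Z}_q$ be $\varepsilon$-biased sets of size $d$ with $s_{j,1}=0$. Let $\{\ket{\ell_1},\ldots,\ket{\ell_d}\}$ be an orthonormal basis of $\mathbb{C}^d$. For $x\in\mathbb{Z}_q=\{0,1,\ldots,q-1\}$ define \[ \ket{\psi_j(x)}=\frac{1}{\sqrt d}\Big(\ket{\ell_1}+e^{i2\pi s_{j,2}x/q}\ket{\ell_2}+\cdots+e^{i2\pi s_{j,d}x/q}\ket{\ell_d}\Big),\qquad \ket{\psi(x)}=\ket{\psi_1(x)}\otimes\cdots\otimes\ket{\psi_m(x)}\in(\mathbb{C}^d)^{\otimes m}. \] Then the map $\psi:\mathbb{Z}_q\to(\mathbb{C}^{d})^{\otimes m}\cong\mathcal{H}^{d^m}$ is a quantum $\left(\frac{d^m}{q},\varepsilon^m\right)$-resistant hash function; that is, $\frac{d^m}{q}\le\frac{d^m}{q}$ (the state space dimension $d^m$ divided by the input set size $q$) and for all $x_1\neq x_2$ in $\mathbb{Z}_q$, $\left|\braket{\psi(x_1)}{\psi(x_2)}\right|\le\varepsilon^m$.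
   Context: For $S=\{s_1,\ldots,s_d\}\subseteq\mathbb{Z}_q$ and $x\in\mathbb{Z}_q$, $\mathrm{bias}(S,x)=\frac{1}{|S|}\left|\sum_{s\in S}e^{2\pi i s x/q}\right|$; $S$ is $\varepsilon$-biased if $\mathrm{bias}(S,x)\le\varepsilon$ for all $x\ne 0$. Definition: for $\delta\in(0,1]$ and $\varepsilon\in[0,1)$, a function $\psi:\mathbb{X}\to\mathcal{H}^K$ (where $\mathcal{H}^K$ is a $K$-dimensional Hilbert space and $\mathbb{X}$ a finite set) is a quantum $(\delta,\varepsilon)$-resistant hash function if (i) ($\delta$-one-wayness) $K/|\mathbb{X}|\le\delta$, and (ii) ($\varepsilon$-collision-resistance) $|\braket{\psi(x_1)}{\psi(x_2)}|\le\varepsilon$ for every pair of distinct $x_1,x_2\in\mathbb{X}$. *)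

From HB Require Import structures.
From mathcomp Require Import all_boot all_order all_algebra.
From mathcomp Require Import reals trigo.
From mathcomp Require Import complex.
Set Implicit Arguments. Unset Strict Implicit. Unset Printing Implicit Defensive.
Import Order.TTheory GRing.Theory Num.Theory.
Local Open Scope ring_scope.
Local Open Scope complex_scope.

Section QHash.
Variable R : realType.
Local Notation C := R[i].

Definition expi (theta : R) : C := (cos theta) +i* (sin theta).

Definition chi (q s x : nat) : C := expi (2 * pi * (s * x)%:R / q%:R).

Definition bias (q : nat) (S : {set 'I_q}) (x : 'I_q) : C :=
  (#|S|%:R)^-1 * `| \sum_(s in S) chi q s x |.

Definition eps_biased (q : nat) (S : {set 'I_q}) (eps : R) : Prop :=
  forall x : 'I_q, x != 0%N :> nat -> bias S x <= eps%:C.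

(* vectors of a finite-dimensional Hilbert space with orthonormal coordinate
   basis indexed by the finite type I (dimension #|I|) *)
Definition inner (I : finType) (u v : I -> C) : C := \sum_(i : I) (u i)^* * v i.

Definition orthonormal_basis (d : nat) (l : 'I_d -> 'I_d -> C) : Prop :=
  forall a b : 'I_d, inner (l a) (l b) = (a == b)%:R.

(* tensor product v_1 (x) ... (x) v_m of vectors of C^d, as a vector of
   (C^d)^{(x) m} with coordinates indexed by {ffun 'I_m -> 'I_d} *)
Definition tens (m d : nat) (v : 'I_m -> 'I_d -> C) : {ffun 'I_m -> 'I_d} -> C :=
  fun k => \prod_(j < m) v j (k j).

Definition qresistant_hash (X I : finType) (psi : X -> I -> C) (delta eps : R)
  : Prop :=
  (#|I|%:R / #|X|%:R <= delta) /\
  (forall x1 x2 : X, x1 != x2 -> `| inner (psi x1) (psi x2) | <= eps%:C).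

End QHash.

(* The inner product of two tensor products is the product of the inner
   products of the factors.  By orthonormality of the basis, the j-th factor is
   (1/d) sum_k conj(e(s_jk x1)) e(s_jk x2) = (1/d) sum_k e(s_jk (x2 - x1)), whose
   modulus is bias(S_j, x2 - x1) <= eps because x2 - x1 <> 0 in Z_q.  Hence the
   modulus of <psi(x1)|psi(x2)> is at most eps^m.  One-wayness is just the
   dimension count #|{ffun 'I_m -> 'I_d}| = d^m. *)

From HB Require Import structures.
From mathcomp Require Import all_boot all_order all_algebra.
From mathcomp Require Import reals trigo.
From mathcomp Require Import complex.
From mathcomp Require Import zify ring.
Set Implicit Arguments. Unset Strict Implicit. Unset Printing Implicit Defensive.
Import Order.TTheory GRing.Theory Num.Theory.
Local Open Scope ring_scope.
Local Open Scope complex_scope.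

Section Characters.
Variable R : realType.

Lemma expi0 : expi 0 = 1 :> R[i].
Proof. by rewrite /expi cos0 sin0. Qed.

Lemma expiD (a b : R) : expi (a + b) = expi a * expi b.
Proof. by rewrite /expi cosD sinD [RHS]/GRing.mul /=; congr Complex; ring. Qed.

Lemma conj_expiM (a : R) : (expi a)^* * expi a = 1.
Proof.
rewrite /expi [LHS]/GRing.mul /=; congr Complex; last by ring.
by rewrite -(cos2Dsin2 a); ring.
Qed.

Lemma expiD2pi (a : R) (n : nat) : expi (a + 2 * pi * n%:R) = expi a.
Proof.
elim: n => [|n IHn]; first by rewrite mulr0 addr0.
have -> : a + 2 * pi * n.+1%:R = (a + 2 * pi * n%:R) + pi *+ 2.
  by rewrite -natr1 mulr2n; ring.
by rewrite /expi cosD2pi sinD2pi -/(expi _) IHn.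
Qed.

Lemma chiD (q s x y : nat) : chi R q s (x + y) = chi R q s x * chi R q s y.
Proof. by rewrite /chi -expiD mulnDr natrD; congr expi; ring. Qed.

Lemma chi_addMq (q s x k : nat) : (0 < q)%N ->
  chi R q s (x + k * q) = chi R q s x.
Proof.
move=> q_gt0; rewrite chiD /chi -[RHS]mulr1 -expi0; congr (_ * _).
have qr_neq0 : (q%:R : R) != 0 by rewrite pnatr_eq0 -lt0n.
rewrite -(expiD2pi 0 (s * k)) add0r mulnA natrM.
by congr expi; field.
Qed.

(* [x2 - x1] in Z_q; the modulus is positive since ['I_q] is inhabited. *)
Definition ord_diff {q : nat} (x1 x2 : 'I_q) : 'I_q :=
  Ordinal (ltn_pmod (x2 + q - x1) (leq_ltn_trans (leq0n x1) (ltn_ord x1))).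

Lemma ord_diff_eq0 (q : nat) (x1 x2 : 'I_q) :
  (ord_diff x1 x2 == 0 :> nat) = (x1 == x2).
Proof.
apply/eqP/eqP => [diff0 | ->]; last by rewrite /= addKn modnn.
apply: val_inj; move: diff0 => /=.
have := divn_eq (x2 + q - x1) q; have := ltn_ord x1; have := ltn_ord x2.
by case: ((x2 + q - x1) %/ q)%N => [|[|k]]; nia.
Qed.

Lemma conj_chiM (q s : nat) (x1 x2 : 'I_q) :
  (chi R q s x1)^* * chi R q s x2 = chi R q s (ord_diff x1 x2).
Proof.
have q_gt0 : (0 < q)%N by apply: leq_ltn_trans (ltn_ord x1).
have x2E : (x2 + 1 * q = x1 + ord_diff x1 x2 + ((x2 + q - x1) %/ q) * q)%N.
  by have := divn_eq (x2 + q - x1) q; have := ltn_ord x1; rewrite /=; lia.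
rewrite -(chi_addMq s x2 1 q_gt0) x2E chi_addMq // chiD mulrA.
by rewrite conj_expiM mul1r.
Qed.

End Characters.

Section Inner.
Variable R : realType.
Local Notation C := R[i].

Lemma inner_tens (m d : nat) (u v : 'I_m -> 'I_d -> C) :
  inner (tens u) (tens v) = \prod_(j < m) inner (u j) (v j).
Proof.
rewrite /inner /tens.
under eq_bigr => k _ do rewrite rmorph_prod -big_split /=.
by rewrite bigA_distr_bigA.
Qed.

Lemma orthonormal_inner_comb (d : nat) (l : 'I_d -> 'I_d -> C) (a b : 'I_d -> C) :
  orthonormal_basis l ->
  inner (fun t => \sum_(k < d) a k * l k t) (fun t => \sum_(k < d) b k * l k t)
  = \sum_(k < d) (a k)^* * b k.
Proof.
move=> hl; rewrite /inner.
under eq_bigr => t _ do rewrite rmorph_sum big_distrl /=.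
rewrite exchange_big; apply: eq_bigr => k _.
under eq_bigr => t _ do rewrite big_distrr /=.
rewrite exchange_big (bigD1 k) //= [X in _ + X]big1 => [|k' neq_k'k].
  under eq_bigr => t _ do rewrite rmorphM mulrACA.
  by rewrite -mulr_sumr -/(inner _ _) hl eqxx mulr1 addr0.
under eq_bigr => t _ do rewrite rmorphM mulrACA.
by rewrite -mulr_sumr -/(inner _ _) hl eq_sym (negbTE neq_k'k) mulr0.
Qed.

End Inner.

Section PhaseStates.
Variables (R : realType) (q d : nat) (l : 'I_d -> 'I_d -> R[i]).
Hypothesis hl : orthonormal_basis l.

Definition phase_state (s : 'I_d -> 'I_q) (x : 'I_q) (t : 'I_d) : R[i] :=
  \sum_(k < d) ((Num.sqrt (d%:R : R))^-1)%:C * chi R q (s k) x * l k t.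

Lemma inner_phase_state (s : 'I_d -> 'I_q) (x1 x2 : 'I_q) :
  inner (phase_state s x1) (phase_state s x2)
  = (d%:R)^-1 * \sum_(k < d) chi R q (s k) (ord_diff x1 x2).
Proof.
set c := ((Num.sqrt (d%:R : R))^-1)%:C.
have c2 : c * c = (d%:R)^-1.
  by rewrite -rmorphM -expr2 exprVn sqr_sqrtr ?ler0n // fmorphV rmorph_nat.
rewrite orthonormal_inner_comb // mulr_sumr; apply: eq_bigr => k _.
rewrite rmorphM /= -/c geC0_conj ?ler0c ?invr_ge0 ?sqrtr_ge0 //.
by rewrite mulrACA c2 conj_chiM.
Qed.

Lemma normr_inner_phase_state (s : 'I_d -> 'I_q) (x1 x2 : 'I_q) :
  injective s ->
  `|inner (phase_state s x1) (phase_state s x2)|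
  = bias R [set s k | k : 'I_d] (ord_diff x1 x2).
Proof.
move=> s_inj; rewrite inner_phase_state /bias big_imset /=; last exact: in2W.
by rewrite card_imset // card_ord normrM ger0_norm ?invr_ge0 ?ler0n.
Qed.

End PhaseStates.

Theorem theorem1 (R : realType) (q d m : nat) (eps : R)
  (hq : (1 <= q)%N) (hd : (1 <= d)%N) (hm : (1 <= m)%N)
  (heps0 : 0 <= eps) (heps1 : eps < 1)
  (s : 'I_m -> 'I_d -> 'I_q)
  (hsize : forall j : 'I_m, #|[set s j k | k : 'I_d]| = d)
  (hbias : forall j : 'I_m, eps_biased [set s j k | k : 'I_d] eps)
  (hs0 : forall (j : 'I_m) (k : 'I_d), k = 0%N :> nat -> s j k = 0%N :> nat)
  (l : 'I_d -> 'I_d -> R[i]) (hl : orthonormal_basis l) :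
  let psi_j := fun (j : 'I_m) (x : 'I_q) (t : 'I_d) =>
    \sum_(k < d) ((Num.sqrt (d%:R : R))^-1)%:C * chi R q (s j k) x * l k t in
  let psi := fun x : 'I_q => tens (fun j => psi_j j x) in
  qresistant_hash psi ((d ^ m)%:R / q%:R) (eps ^+ m).
Proof.
move=> psi_j psi; split; first by rewrite card_ffun !card_ord.
move=> x1 x2 neq_x12.
rewrite inner_tens normr_prod rmorphXn -[m in _ ^+ m]card_ord -prodr_const.
apply: ler_prod => j _; rewrite normr_ge0 /=.
have s_inj : injective (s j).
  by apply: in2T; apply/imset_injP; rewrite hsize card_ord.
have -> : psi_j j = phase_state l (s j) by [].
rewrite normr_inner_phase_state //.
by apply: hbias; rewrite ord_diff_eq0.
Qed.
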